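(* Let $G$ be the $3$-uniform tight cycle ($k=3$, $s=2$) with $n$ vertices. Then the maximum degree of $G$ is $\Delta=3$. When $n=4$, $\lambda(\mathcal{L})=4$. When $n\ge 5$, $\lambda(\mathcal{L})\le\Delta+1.5=4.5$.
   Context: A $k$-uniform $s$-cycle with $m$ edges has vertex set $\mathbb{Z}_n$, $n=m(k-s)$ (vertex $n+i$ identified with $i$), and edges $e_j=\{j(k-s)+1,\ldots,j(k-s)+k\}$, $j=0,\ldots,m-1$; it is assumed that $n\ge 2k-s$. For $k=3,s=2$ this means vertex set $\mathbb{Z}_n$, $n\ge 4$, with edges $\{j+1,j+2,j+3\}$ for $j=0,\ldots,n-1$. The degree $d_i$ of a vertex is the number of edges containing it. A Laplacian H-eigenvalue of $G$ is a real $\lambda$ for which there exists $\mathbf{x}\in\mathbb{R}^n\setminus\{0\}$ with $\lambda x_i^{k-1}=d_ix_i^{k-1}-\sum_{e\ni i}\prod_{j\in e\setminus\{i\}}x_j$ for all $i$ (equivalently, an H-eigenvalue of the Laplacian tensor $\mathcal{L}=\mathcal{D}-\mathcal{A}$, with $\mathcal{A}$ the adjacency tensor having entries $1/(k-1)!$ on edges and $\mathcal{D}$ the diagonal degree tensor); $\lambda(\mathcal{L})$ is the largest Laplacian H-eigenvalue. *)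

From mathcomp Require Import all_boot all_order all_algebra.
From mathcomp Require Import reals.
Set Implicit Arguments. Unset Strict Implicit. Unset Printing Implicit Defensive.
Import Order.TTheory GRing.Theory Num.Theory.
Local Open Scope ring_scope.

Definition scycle_edge (k s n j : nat) : {set 'I_n} :=
  [set v : 'I_n | [exists t : 'I_k, ((j * (k - s) + t.+1) %% n)%N == (v : nat)]].

(* Edge set of the k-uniform s-cycle with m edges on n = m(k-s) vertices. *)
Definition scycle (k s m n : nat) : {set {set 'I_n}} :=
  [set scycle_edge k s n j | j : 'I_m].

Definition tight3cycle (n : nat) : {set {set 'I_n}} := scycle 3 2 n n.

Definition hdeg n (E : {set {set 'I_n}}) (i : 'I_n) : nat :=
  #|[set e in E | i \in e]|.

Definition hmaxdeg n (E : {set {set 'I_n}}) : nat := (\max_(i : 'I_n) hdeg E i)%N.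

Definition lap_H_eig (R : realType) (k n : nat) (E : {set {set 'I_n}}) (lam : R) : Prop :=
  exists x : 'I_n -> R, (exists i, x i != 0) /\
    forall i : 'I_n,
      lam * x i ^+ k.-1 =
        (hdeg E i)%:R * x i ^+ k.-1 - \sum_(e in E | i \in e) \prod_(j in e :\ i) x j.

Definition largest_lap_H_eig (R : realType) (k n : nat) (E : {set {set 'I_n}}) (lam : R) : Prop :=
  lap_H_eig k E lam /\ forall mu : R, lap_H_eig k E mu -> mu <= lam.

(* The edges of the tight cycle on Z_n are the translates j + {1, 2, 3}; for n >= 4 a
   translate determines j, so vertex i lies in exactly the three edges with
   j in {i - 1, i - 2, i - 3}.  For a 3-uniform hypergraph, summing the eigen-equation
   over all vertices and using 2 (ab + bc + ca) = (a + b + c)^2 - (a^2 + b^2 + c^2) on each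
   edge gives
     2 lam sum_i x_i^2 = 3 sum_i d_i x_i^2 - sum_e (sum_(i in e) x_i)^2,
   hence lam <= 3 Delta / 2.  On four vertices the edges are the complements of the
   singletons, the last sum equals 2 (sum_i x_i)^2 + sum_i x_i^2, hence lam <= 4, with
   equality for x = (1, 1, -1, -1). *)

From mathcomp Require Import all_boot all_order all_algebra.
From mathcomp Require Import reals.
From mathcomp Require Import zify ring lra.
Import Order.TTheory GRing.Theory Num.Theory.
Local Open Scope ring_scope.

Section Translates.
Context {V : finZmodType}.
Implicit Types (i j : V) (A : {set V}).

Lemma mem_translate i j A : (i \in [set j + x | x in A]) = (i - j \in A).
Proof. by rewrite -{1}(subrKC j i) mem_imset //; exact: addrI. Qed.

Lemma card_translate j A : #|[set j + x | x in A]| = #|A|.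
Proof. by apply: card_imset; exact: addrI. Qed.

Lemma translates_containing i A :
  [set e in [set [set j + x | x in A] | j : V] | i \in e] =
  [set [set j + x | x in A] | j in [set i - x | x in A]].
Proof.
apply/setP => e; rewrite inE; apply/andP/imsetP => [[/imsetP[j _ ->] iAj] | [j]].
  exists j => //; rewrite -[j](subKr i) (mem_imset (f := fun x => i - x)) -?mem_translate //.
  exact: subrI.
case/imsetP => x xA -> ->; split; first exact: imset_f.
by rewrite mem_translate subKr.
Qed.

Lemma card_translates_containing i A :
  injective (fun j => [set j + x | x in A]) ->
  #|[set e in [set [set j + x | x in A] | j : V] | i \in e]| = #|A|.
Proof. by move=> tr_inj; rewrite translates_containing !card_imset //; exact: subrI. Qed.

Definition progression (a : V) (K : nat) : {set V} := [set a *+ k.+1 | k : 'I_K].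

Section Progression.
Context {a : V} {K : nat}.
Hypothesis a_order : forall k, (0 < k <= K)%N -> a *+ k != 0.

Lemma card_progression : #|progression a K| = K.
Proof.
rewrite card_imset ?card_ord // => i j eq_ij; apply/val_inj/eqP.
wlog le_ij : i j eq_ij / (i <= j)%N.
  by move=> IH; case: (leqP i j) => [/IH->//|/ltnW/(IH j i (esym eq_ij))]; rewrite eq_sym.
have : a *+ (j - i) == 0 by rewrite -subSS mulrnBr // eq_ij subrr.
apply: contraLR => /= ne_ij; apply: a_order; have := ltn_ord j; lia.
Qed.

Lemma zero_notin_progression : 0 \notin progression a K.
Proof. by apply/imsetP => -[k _ /esym/eqP]; apply/negP/a_order; rewrite /= ltn_ord. Qed.

Lemma translate_progression_inj : (0 < K)%N ->
  injective (fun j => [set j + x | x in progression a K]).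
Proof.
move=> K_gt0 j j' /setP ejj'; apply/eqP; rewrite -subr_eq0.
have d_notin : j - j' \notin progression a K.
  by rewrite -mem_translate -ejj' mem_translate subrr zero_notin_progression.
have : j + a - j' \in progression a K.
  rewrite -mem_translate -ejj' mem_translate (addrC j) addrK.
  by apply/imsetP; exists (Ordinal K_gt0); rewrite ?mulr1n.
rewrite addrAC => /imsetP[[k lt_kK] _ /eqP].
rewrite mulrSr (inj_eq (addIr a)); case: k lt_kK => [|k] lt_kK; first by rewrite mulr0n.
move=> /eqP dE; case/negP: d_notin; rewrite dE; apply/imsetP.
by exists (Ordinal (ltnW lt_kK)).
Qed.
End Progression.
End Translates.

Section TightCycle.
Variable m : nat.
Local Notation n := m.+4.

Lemma val_natmul1 k : val ((1 : 'I_n) *+ k) = (k %% n)%N.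
Proof. by rewrite Zp_mulrn /= (@modn_small 1) ?mul1n. Qed.

Definition tight_offsets : {set 'I_n} := progression 1 3.

Lemma tight_offsets_order k : (0 < k <= 3)%N -> (1 : 'I_n) *+ k != 0.
Proof. by move=> k_le3; rewrite -val_eqE val_natmul1 /= modn_small; lia. Qed.

Lemma scycle_edgeE (j : 'I_n) :
  scycle_edge 3 2 n j = [set j + x | x in tight_offsets].
Proof.
have modE (k : nat) (v : 'I_n) : ((j + k) %% n == val v)%N = (v - j == 1 *+ k).
  by rewrite (subr_eq v) addrC eq_sym -val_eqE /= val_natmul1 modnDmr.
apply/setP => v; rewrite inE muln1 mem_translate; apply/existsP/imsetP.
  by case=> t; rewrite modE => /eqP ->; exists t.
by case=> t _ vE; exists t; rewrite modE vE.
Qed.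

Lemma tight3cycleE :
  tight3cycle n = [set [set j + x | x in tight_offsets] | j : 'I_n].
Proof. by apply: eq_imset => j; rewrite scycle_edgeE. Qed.

Lemma card_tight_offsets : #|tight_offsets| = 3%N.
Proof. exact: card_progression tight_offsets_order. Qed.

Lemma tight3cycle_uniform e : e \in tight3cycle n -> #|e| = 3%N.
Proof.
by rewrite tight3cycleE => /imsetP[j _ ->]; rewrite card_translate card_tight_offsets.
Qed.

Lemma hdeg_tight3cycle i : hdeg (tight3cycle n) i = 3%N.
Proof.
rewrite /hdeg tight3cycleE card_translates_containing ?card_tight_offsets //.
exact: translate_progression_inj tight_offsets_order _.
Qed.

Lemma hmaxdeg_tight3cycle : hmaxdeg (tight3cycle n) = 3%N.
Proof.
apply/eqP; rewrite eqn_leq; apply/andP; split.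
  by apply/bigmax_leqP => i _; rewrite hdeg_tight3cycle.
by rewrite -(hdeg_tight3cycle 0); apply: leq_bigmax.
Qed.
End TightCycle.

Lemma cards3P (T : finType) (A : {set T}) : #|A| = 3%N ->
  exists a b c, [/\ a != b, a != c, b != c & A = [set a; b; c]].
Proof.
move=> A3; have /card_gt0P[a aA] : (0 < #|A|)%N by rewrite A3.
have /cards2P[b [c [bc Aa]]] : #|A :\ a| == 2%N.
  by move: (cardsD1 a A); rewrite aA A3 add1n => -[<-].
have : (b \in A :\ a) && (c \in A :\ a) by rewrite Aa !inE !eqxx orbT.
rewrite !inE => /andP[/andP[ba _] /andP[ca _]].
exists a, b, c; split; rewrite 1?[a == _]eq_sym //.
by rewrite -setUA -Aa setD1K.
Qed.

Lemma sumsq_gt0 [R : realFieldType] [T : finType] [x : T -> R] [i0 : T] :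
  x i0 != 0 -> 0 < \sum_i x i ^+ 2.
Proof.
move=> xi0; rewrite (bigD1 i0) //=.
have : 0 <= \sum_(i | i != i0) x i ^+ 2 by apply: sumr_ge0 => i _; exact: sqr_ge0.
have : 0 < x i0 ^+ 2 by rewrite lt_def sqrf_eq0 xi0 sqr_ge0.
lra.
Qed.

Lemma sumr_setC1 (V : zmodType) (T : finType) (x : T -> V) j :
  \sum_(i in [set~ j]) x i = \sum_i x i - x j.
Proof.
by rewrite [in RHS](bigD1 j) //= (addrC (x j)) addrK; apply: eq_bigl => i; exact: in_setC1.
Qed.

Section ThreeUniformLaplacian.
Context {R : realType} {n : nat} {E : {set {set 'I_n}}}.

Lemma exchange_incidence (F : 'I_n -> {set 'I_n} -> R) :
  \sum_i \sum_(e in E | i \in e) F i e = \sum_(e in E) \sum_(i in e) F i e.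
Proof.
under eq_bigr => i _ do rewrite big_mkcondr.
by rewrite exchange_big; apply: eq_bigr => e _; rewrite [RHS]big_mkcond.
Qed.

Lemma sum_prod_setD1_card3 (T : finType) (e : {set T}) (x : T -> R) : #|e| = 3%N ->
  2 * \sum_(i in e) \prod_(j in e :\ i) x j =
    (\sum_(i in e) x i) ^+ 2 - \sum_(i in e) x i ^+ 2.
Proof.
case/cards3P => a [b [c [ab ac bc ->]]].
have sum3 (F : T -> R) : \sum_(i in [set a; b; c]) F i = F a + F b + F c.
  by rewrite -setUA big_setU1 /= ?big_setU1 ?big_set1 ?addrA // !inE ?negb_or ?ab ?ac.
have a_bc : a \notin [set b; c] by rewrite !inE negb_or ab ac.
have b_ac : b \notin [set a; c] by rewrite !inE negb_or eq_sym ab bc.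
have c_ab : c \notin [set a; b] by rewrite !inE negb_or eq_sym ac eq_sym bc.
have setD1_3 : [/\ [set a; b; c] :\ a = [set b; c], [set a; b; c] :\ b = [set a; c]
                  & [set a; b; c] :\ c = [set a; b]].
  by split; [rewrite -setUA | rewrite -setUA setUCA | rewrite setUC]; rewrite setU1K.
rewrite !sum3; case: setD1_3 => -> -> ->.
rewrite !big_setU1 ?big_set1 ?inE //=; ring.
Qed.

Lemma sum_incidence_sqr (x : 'I_n -> R) :
  \sum_(e in E) \sum_(i in e) x i ^+ 2 = \sum_i (hdeg E i)%:R * x i ^+ 2.
Proof.
rewrite -exchange_incidence; apply: eq_bigr => i _.
rewrite (eq_bigl (mem [set e in E | i \in e])); last by move=> e /=; rewrite !inE.
by rewrite sumr_const mulr_natl.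
Qed.

Hypothesis E_uniform : forall e, e \in E -> #|e| = 3%N.

Lemma lap_H_eig3_identity [x : 'I_n -> R] [lam : R] :
  (forall i, lam * x i ^+ 3.-1 =
     (hdeg E i)%:R * x i ^+ 3.-1 - \sum_(e in E | i \in e) \prod_(j in e :\ i) x j) ->
  2 * lam * \sum_i x i ^+ 2 =
    3 * \sum_i (hdeg E i)%:R * x i ^+ 2 - \sum_(e in E) (\sum_(i in e) x i) ^+ 2.
Proof.
move=> eig.
have pairs : 2 * \sum_i \sum_(e in E | i \in e) \prod_(j in e :\ i) x j =
    \sum_(e in E) (\sum_(i in e) x i) ^+ 2 - \sum_i (hdeg E i)%:R * x i ^+ 2.
  rewrite exchange_incidence mulr_sumr -sum_incidence_sqr -sumrB.
  by apply: eq_bigr => e /E_uniform; exact: sum_prod_setD1_card3.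
have summed : lam * \sum_i x i ^+ 2 = \sum_i (hdeg E i)%:R * x i ^+ 2 -
    \sum_i \sum_(e in E | i \in e) \prod_(j in e :\ i) x j.
  by rewrite mulr_sumr -sumrB; apply: eq_bigr => i _; exact: eig.
rewrite -mulrA summed; lra.
Qed.

Lemma lap_H_eig3_le (D : nat) (lam : R) : (forall i, (hdeg E i <= D)%N) ->
  lap_H_eig 3 E lam -> 2 * lam <= 3 * D%:R.
Proof.
move=> degD [x [[i0 xi0] eig]].
have Q_gt0 := sumsq_gt0 xi0.
have S_ge0 : 0 <= \sum_(e in E) (\sum_(i in e) x i) ^+ 2.
  by apply: sumr_ge0 => e _; exact: sqr_ge0.
have degQ : \sum_i (hdeg E i)%:R * x i ^+ 2 <= D%:R * \sum_i x i ^+ 2.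
  by rewrite mulr_sumr; apply: ler_sum => i _; rewrite ler_wpM2r ?sqr_ge0 ?ler_nat.
have := lap_H_eig3_identity eig; rewrite -(ler_pM2r Q_gt0); lra.
Qed.
End ThreeUniformLaplacian.

Section TightCycle4.
Variable R : realType.

Lemma tight_offsets4 : tight_offsets 0 = [set~ 0].
Proof.
apply/eqP; rewrite eqEcard cardsC1 card_ord card_tight_offsets leqnn andbT.
apply/subsetP => v v_off; rewrite !inE; apply: contraTneq v_off => ->.
exact: zero_notin_progression (@tight_offsets_order 0).
Qed.

Lemma tight3cycle4E : tight3cycle 4 = [set [set~ j] | j : 'I_4].
Proof.
rewrite (tight3cycleE 0) tight_offsets4; apply: eq_imset => j.
by apply/setP => v; rewrite mem_translate !inE subr_eq0.
Qed.

Lemma sum_tight3cycle4 (F : {set 'I_4} -> R) :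
  \sum_(e in tight3cycle 4) F e = \sum_j F [set~ j].
Proof. by rewrite tight3cycle4E big_imset // => j k _ _ /setC_inj/set1_inj. Qed.

Lemma lap_H_eig_tight3cycle4_le (lam : R) : lap_H_eig 3 (tight3cycle 4) lam -> lam <= 4.
Proof.
move=> [x [[i0 xi0] eig]]; set T := \sum_i x i.
have Q_gt0 := sumsq_gt0 xi0.
have deg3 : \sum_i (hdeg (tight3cycle 4) i)%:R * x i ^+ 2 = 3 * \sum_i x i ^+ 2.
  by rewrite mulr_sumr; apply: eq_bigr => i _; rewrite (hdeg_tight3cycle 0).
have edge_sums : \sum_(e in tight3cycle 4) (\sum_(i in e) x i) ^+ 2 =
    2 * T ^+ 2 + \sum_i x i ^+ 2.
  rewrite sum_tight3cycle4; under eq_bigr => j _ do rewrite sumr_setC1 -/T sqrrB.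
  rewrite !big_split /= sumrN sumr_const card_ord sumrMnl -mulr_sumr -/T; ring.
have := lap_H_eig3_identity (@tight3cycle_uniform 0) eig.
rewrite deg3 edge_sums -(ler_pM2r Q_gt0); have := sqr_ge0 T; lra.
Qed.

Lemma sum_prod_tight3cycle4_sign (x : 'I_4 -> R) i :
  (forall j, x j ^+ 2 = 1) -> \prod_j x j = 1 ->
  \sum_(e in tight3cycle 4 | i \in e) \prod_(j in e :\ i) x j = x i * (\sum_j x j - x i).
Proof.
move=> sqr1 prod1.
have prod_setD1 (e : {set 'I_4}) j :
    j \in e -> \prod_(k in e :\ j) x k = x j * \prod_(k in e) x k.
  by move=> je; rewrite (big_setD1 j je) mulrA -expr2 sqr1 mul1r.
have prod_setC1 j : \prod_(k in [set~ j]) x k = x j.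
  rewrite (eq_bigl (fun k => k != j)); last by move=> k; exact: in_setC1.
  by rewrite -[RHS]mulr1 -[in RHS]prod1 [in RHS](bigD1 j) //= mulrA -expr2 sqr1 mul1r.
rewrite (eq_bigr (fun e : {set 'I_4} => x i * \prod_(j in e) x j)); last first.
  by move=> e /andP[_ /prod_setD1].
rewrite -mulr_sumr big_mkcondr sum_tight3cycle4 -big_mkcondr -sumr_setC1.
under eq_bigr do rewrite prod_setC1.
by congr (_ * _); apply: eq_bigl => j; rewrite /= !in_setC1 eq_sym.
Qed.

Definition tight3cycle4_eigvec (i : 'I_4) : R := if (i < 2)%N then 1 else -1.

Lemma lap_H_eig_tight3cycle4 : lap_H_eig 3 (tight3cycle 4) (4 : R).
Proof.
set x := tight3cycle4_eigvec.
have sqr1 j : x j ^+ 2 = 1.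
  by rewrite /x /tight3cycle4_eigvec; case: ifP; rewrite ?sqrrN expr1n.
have [sum0 prod1] : \sum_j x j = 0 /\ \prod_j x j = 1.
  by rewrite !big_ord_recr !big_ord0 /x /tight3cycle4_eigvec /=; split; ring.
exists x; split; first by exists 0; rewrite /x /tight3cycle4_eigvec /= oner_neq0.
move=> i; rewrite (hdeg_tight3cycle 0) sum_prod_tight3cycle4_sign // sum0 /=; ring.
Qed.
End TightCycle4.

Theorem proposition8p2 (R : realType) (n : nat) (hn : (4 <= n)%N) :
  hmaxdeg (tight3cycle n) = 3%N /\
  (n = 4%N -> largest_lap_H_eig 3 (tight3cycle n) (4 : R)) /\
  ((5 <= n)%N -> forall mu : R, lap_H_eig 3 (tight3cycle n) mu -> mu <= 9 / 2).
Proof.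
case: n hn => [|[|[|[|m]]]] // _.
split; first exact: hmaxdeg_tight3cycle.
split.
  case=> ->; split; [exact: lap_H_eig_tight3cycle4 | exact: lap_H_eig_tight3cycle4_le].
(* The bound does not need n >= 5. *)
move=> _ mu eig.
have deg3 i : (hdeg (tight3cycle m.+4) i <= 3)%N by rewrite hdeg_tight3cycle.
have := lap_H_eig3_le (@tight3cycle_uniform m) 3 mu deg3 eig; lra.
Qed.
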